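(* Fix $n\ge 2$ and $i\in\{1,\dots,n\}$. Then for every integer $k\ge 1$: (1) $\partial[i]\,\lambda_n^{(k)}=(-1)^{i-1}\,k\,\lambda_{n-1}^{(k)}$; (2) for $1\le k\le n$, $\partial[i]\,e_n^{(k)}=(-1)^{i-1}\,e_{n-1}^{(k-1)}$, where $e_{n-1}^{(0)}:=0$ and $e_{n-1}^{(n)}:=0$ (in particular $\partial[i]e_n^{(1)}=0$). Here both sides are regarded as elements of the span of words on $\{1,\dots,n\}\setminus\{i\}$ via the identification described in the context.
   Context: Identify each permutation $\sigma\in S_r$ with the injective word $\sigma(1)\sigma(2)\cdots\sigma(r)$ on $\{1,\dots,r\}$ (one-line notation), so that elements of the group algebra $\mathbb{C}S_r$ are linear combinations of such words. A descent of a word $w_1\cdots w_m$ is an index $t$ with $w_t>w_{t+1}$. For $1\le k\le r$ let $S(r;k)$ be the set of permutations in $S_r$ with exactly $k-1$ descents, and define $l_r^{(k)}=(-1)^{k-1}\sum_{\sigma\in S(r;k)}\mathrm{sgn}(\sigma)\,\sigma$ (with $l_r^{(k)}=0$ if $S(r;k)$ is empty, e.g. $k>r$), and $\lambda_r^{(k)}=\sum_{t=0}^{k-1}(-1)^t\binom{r+t}{t}\,l_r^{(k-t)}$ for $k\ge1$. The Eulerian idempotents $e_r^{(1)},\dots,e_r^{(r)}\in\mathbb{C}S_r$ are the elements satisfying $(-1)^{k-1}\lambda_r^{(k)}=\sum_{j=1}^{r}k^j e_r^{(j)}$ for all integers $k\ge1$ (they are determined by the cases $k=1,\dots,r$ since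 the matrix $(k^j)$ is an invertible Vandermonde matrix). For an injective word $a_1\cdots a_m$ on $\{1,\dots,n\}$, the simplicial boundary is $\partial(a_1\cdots a_m)=\sum_{j=1}^m(-1)^{j-1}a_1\cdots a_{j-1}a_{j+1}\cdots a_m$, extended linearly. For $i\in\{1,\dots,n\}$, $\partial[i]$ denotes the part of $\partial$ that deletes the letter $i$: $\partial[i](a_1\cdots a_m)=(-1)^{j-1}a_1\cdots\widehat{a_j}\cdots a_m$ if $a_j=i$, and $0$ if $i$ does not occur. Words on $\{1,\dots,n\}\setminus\{i\}$ of length $n-1$ are identified with permutations in $S_{n-1}$ by replacing each letter $i+t$ ($t\ge1$) by $i+t-1$; via this identification $\lambda_{n-1}^{(k)}$ and $e_{n-1}^{(k)}$ are viewed as linear combinations of words on $\{1,\dots,n\}\setminus\{i\}$. *)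

From HB Require Import structures.
From mathcomp Require Import all_boot all_order all_algebra.
From mathcomp Require Import fingroup perm algC.
Set Implicit Arguments. Unset Strict Implicit. Unset Printing Implicit Defensive.
Import Order.TTheory GRing.Theory Num.Theory.
Local Open Scope ring_scope.

(* Letters are 0-based: the letter a : 'I_r stands for the paper's letter a+1. *)

Definition word (r : nat) (s : 'S_r) : seq nat := [seq val (s j) | j <- enum 'I_r].

Definition ndes (w : seq nat) : nat :=
  count (fun t => nth 0%N w t.+1 < nth 0%N w t)%N (iota 0 (size w).-1).

(* Elements of C S_r are coefficient functions 'S_r -> algC. *)
Definition sgnp (r : nat) (s : 'S_r) : algC := (-1) ^+ odd_perm s.

Definition lE (r k : nat) (s : 'S_r) : algC :=
  if (1 <= k)%N && (ndes (word s) == k.-1) then (-1) ^+ k.-1 * sgnp s else 0.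

Definition lam (r k : nat) (s : 'S_r) : algC :=
  \sum_(t < k) (-1) ^+ (t : nat) * ('C(r + t, t))%:R * @lE r (k - t)%N s.

(* Vandermonde matrix (k^j)_{1<=k,j<=r}, 0-based indices a,b stand for k=a+1, j=b+1 *)
Definition vdm (r : nat) : 'M[algC]_r := \matrix_(a < r, b < r) ((a.+1)%:R ^+ b.+1).

(* Eulerian idempotent e_r^(j): the unique solution of
   (-1)^(k-1) lambda_r^(k) = sum_{j=1}^r k^j e_r^(j), k = 1..r.
   It is 0 unless 1 <= j <= r (so e_r^(0) = 0, e_r^(r+1) = 0). *)
Definition eul (r j : nat) (s : 'S_r) : algC :=
  \sum_(b < r | b.+1 == j) \sum_(a < r) invmx (vdm r) b a * ((-1) ^+ a * @lam r a.+1 s).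

(* partial[i] : C S_n -> C S_{n-1} (via the relabelling of letters > i). *)
Definition bd (n : nat) (i : nat) (x : 'S_n -> algC) (t : 'S_n.-1) : algC :=
  \sum_(s : 'S_n | [seq unbump i a | a <- word s & a != i] == word t)
     (-1) ^+ (index i (word s)) * x s.

Arguments lE r k s : clear implicits.
Arguments lam r k s : clear implicits.
Arguments eul r j s : clear implicits.

(* On a permutation with d descents, (-1)^(k-1) lambda_r^(k) takes the value
   sgn * C(r+k-1-d, r).  The permutations that partial[i] sends to a given
   tau in S_(n-1) are tau with the letter i inserted at a position j; their
   sign (-1)^(i+j) sgn(tau) cancels the sign (-1)^j of partial, and of the n
   insertion positions exactly n-1-d create a new descent while the others
   keep d.  So (1) reduces to the identity
     (d+1) C(n+k-1-d, n) + (n-1-d) C(n+k-2-d, n) = k C(n+k-2-d, n-1).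
   For (2), both sides of the relation defining the e_r^(j) are polynomials
   of degree at most r in k that agree at k = 0, ..., r, so the relation
   holds for every k.  Applying partial[i] and (1) to it gives
     sum_j k^j partial[i] e_n^(j) = (-1)^(i-1) sum_j k^(j+1) e_(n-1)^(j),
   and inverting the Vandermonde matrix compares coefficients. *)

From HB Require Import structures.
From mathcomp Require Import all_boot all_order all_algebra.
From mathcomp Require Import fingroup perm algC.
From mathcomp Require Import zify ring.
Set Implicit Arguments. Unset Strict Implicit. Unset Printing Implicit Defensive.
Import GRing.Theory Num.Theory.
Local Open Scope ring_scope.

Lemma ndes_cons2 x y w : ndes [:: x, y & w] = ((y < x)%N + ndes (y :: w))%N.
Proof. by rewrite /ndes /= (iotaDl 1 0) count_map. Qed.

Lemma ndes1 x : ndes [:: x] = 0%N. Proof. by []. Qed.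

Lemma ndes_map_bump i w : ndes (map (bump i) w) = ndes w.
Proof.
elim: w => [|a [|b w] IH] //; rewrite !map_cons ndes_cons2 -map_cons IH ndes_cons2.
by congr (nat_of_bool _ + _)%N; rewrite /bump; case: (leqP i a); case: (leqP i b); lia.
Qed.

Lemma ndes_le_size w : (ndes w <= (size w).-1)%N.
Proof. by elim: w => [|a [|b w] IH] //; rewrite ndes_cons2 /= in IH *; case: (b < a)%N; lia. Qed.

Definition ins (T : Type) (j : nat) (x : T) (u : seq T) := take j u ++ x :: drop j u.

Lemma ins0 (T : Type) (x : T) u : ins 0 x u = x :: u. Proof. by rewrite /ins take0 drop0. Qed.
Lemma insS (T : Type) j (x y : T) u : ins j.+1 x (y :: u) = y :: ins j x u. Proof. by []. Qed.

Lemma ndes_ins j x u : (ndes u <= ndes (ins j x u) <= (ndes u).+1)%N.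
Proof.
elim: u j => [|y u IH] [|j]; rewrite ?ins0 ?insS //.
- by rewrite ndes_cons2; case: (y < x)%N => /=; lia.
case: u IH => [|z u] IH; case: j => [|j]; rewrite ?ins0 ?insS ?ndes_cons2 ?ndes1.
- by case: (x < y)%N => /=; lia.
- by rewrite /ins /=; case: (x < y)%N.
- by case: (ltngtP x y); case: (ltngtP z x); case: (ltngtP z y) => /=; lia.
- by have := IH j.+1; rewrite insS; lia.
Qed.

Lemma sum_ins_cons (T : Type) (f : seq T -> nat) (x y : T) u :
  (\sum_(j < (size u).+2) f (ins j x (y :: u)) =
   f [:: x, y & u] + \sum_(j < (size u).+1) f (y :: ins j x u))%N.
Proof. by rewrite big_ord_recl ins0; under eq_bigr do rewrite lift0 insS. Qed.

Lemma sum_ndes_ins (x : nat) (u : seq nat) : x \notin u ->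
  (\sum_(j < (size u).+1) ndes (ins j x u) = size u * (ndes u).+1)%N.
Proof.
elim: u => [|y [|z w] IH]; first by rewrite big_ord1.
  rewrite inE !big_ord_recl big_ord0 => xy.
  by rewrite /ins /= !ndes_cons2 !ndes1; case: ltngtP xy.
move=> /[!inE]; rewrite negb_or => /andP[xy /IH {}IH].
rewrite (sum_ins_cons _ x z) [size (z :: w)]/= ndes_cons2 in IH.
rewrite (sum_ins_cons _ x y (z :: w)) (sum_ins_cons (fun v => ndes (y :: v))).
under eq_bigr do rewrite ndes_cons2.
rewrite big_split sum_nat_const card_ord /= !ndes_cons2.
have xy1 : ((y < x)%N + (x < y)%N = 1)%N by case: ltngtP xy.
by move: IH xy1; move: (\sum_(j < _) _)%N => S *; nia.
Qed.

Lemma sum_ins_ndes (V : nmodType) (f : nat -> V) (x : nat) (u : seq nat) m :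
  x \notin u -> size u = m ->
  \sum_(j < m.+1) f (ndes (ins j x u)) =
  f (ndes u) *+ (ndes u).+1 + f (ndes u).+1 *+ (m - ndes u).
Proof.
move=> xu <-; have := ndes_le_size u; set d := ndes u => d_le.
pose up := [pred j : 'I_(size u).+1 | ndes (ins j x u) == d.+1].
have ndes_up (j : 'I_(size u).+1) : ndes (ins j x u) = (d + (j \in up))%N.
  by rewrite inE; have := ndes_ins j x u; case: eqP => /= [->|]; lia.
have card_up : #|up| = (size u - d)%N.
  have sum_up : (\sum_j (j \in up))%N = #|up|.
    by rewrite -sum1_card [RHS]big_mkcond; apply: eq_bigr => j _; case: (j \in up).
  have := sum_ndes_ins xu; rewrite (eq_bigr _ (fun j _ => ndes_up j)).
  rewrite big_split /= sum_nat_const card_ord sum_up -/d.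
  by move: #|up| => c; lia.
have card_down : #|[predC up]| = d.+1.
  have := cardC up; rewrite card_ord card_up.
  by move: #|[predC up]| => c; lia.
rewrite (bigID up) addrC; congr (_ + _).
  by rewrite (eq_bigr (fun=> f d.+1)) ?sumr_const ?card_up // => j /= /eqP ->.
rewrite (eq_bigr (fun=> f d)) ?sumr_const ?card_down // => j.
by move=> /= /negbTE upF; rewrite ndes_up inE upF addn0.
Qed.

Section Insertion.
Variables (T : eqType) (x : T) (u : seq T) (j : nat).
Hypothesis (ju : (j <= size u)%N).

Lemma size_ins : size (ins j x u) = (size u).+1.
Proof. by rewrite size_cat /= size_take size_drop; case: ltngtP ju; lia. Qed.

Lemma nth_ins_at x0 : nth x0 (ins j x u) j = x.
Proof. by rewrite nth_cat size_take_min (minn_idPl ju) ltnn subnn. Qed.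

Lemma nth_ins_bump x0 q : nth x0 (ins j x u) (bump j q) = nth x0 u q.
Proof.
rewrite nth_cat size_take_min (minn_idPl ju) /bump.
case: (leqP j q) => [jq | qj]; rewrite ?add0n ?add1n; last by rewrite qj nth_take.
by rewrite ltnNge ltnW //= subSn //= nth_drop subnKC.
Qed.

Lemma index_ins : x \notin u -> index x (ins j x u) = j.
Proof.
move=> xu; rewrite index_cat ifN; last by apply: contra xu; apply: mem_take.
by rewrite /= eqxx addn0 size_take_min (minn_idPl ju).
Qed.

Lemma filter_ins : x \notin u -> [seq a <- ins j x u | a != x] = u.
Proof.
move=> xu; rewrite filter_cat /= eqxx -filter_cat cat_take_drop.
by apply/all_filterP/allP => a au; apply: contraNneq xu => <-.
Qed.

End Insertion.

Lemma size_word r (s : 'S_r) : size (word s) = r.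
Proof. by rewrite size_map size_enum_ord. Qed.

Lemma nth_word r (s : 'S_r) (p : 'I_r) : nth 0%N (word s) p = s p.
Proof. by rewrite (nth_map p) ?size_enum_ord // nth_ord_enum. Qed.

Lemma word_inj r : injective (@word r).
Proof.
move=> s1 s2 /eq_in_map eq_s; apply/permP => p.
by apply: val_inj; apply: eq_s; rewrite mem_enum.
Qed.

Lemma ndes_word_le r (s : 'S_r) : (ndes (word s) <= r.-1)%N.
Proof. by have := ndes_le_size (word s); rewrite size_word. Qed.

Lemma notin_map_bump (i : nat) (w : seq nat) : i \notin map (bump i) w.
Proof. by apply/mapP => -[a _ /eqP]; rewrite (negbTE (neq_bump _ _)). Qed.

Lemma size_bump_word_ge n (i j : 'I_n.+1) (t : 'S_n) :
  (j <= size (map (bump i) (word t)))%N.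
Proof. by rewrite size_map size_word leq_ord. Qed.

Lemma word_lift_perm n (i j : 'I_n.+1) (t : 'S_n) :
  word (lift_perm j i t) = ins j (i : nat) (map (bump i) (word t)).
Proof.
have jn := size_bump_word_ge i j t.
apply: (@eq_from_nth _ 0%N) => [|p]; first by rewrite size_word size_ins // size_map size_word.
rewrite size_word => pn; rewrite -[p]/(val (Ordinal pn)) nth_word.
case: (unliftP j (Ordinal pn)) => [q|] ->; first rewrite lift_perm_lift /= nth_ins_bump //.
  by rewrite (nth_map 0%N) ?size_word // nth_word.
by rewrite lift_perm_id nth_ins_at.
Qed.

Lemma bij_lift_perm n (i : 'I_n.+1) :
  bijective (fun p : 'I_n.+1 * 'S_n => lift_perm p.1 i p.2).
Proof.
apply: inj_card_bij => [[j1 t1] [j2 t2] /= eq_lift|]; last first.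
  by rewrite card_prod card_ord !card_Sn factS.
have eq_j : j1 = j2.
  by apply: (@perm_inj _ (lift_perm j1 i t1)); rewrite {2}eq_lift !lift_perm_id.
move: eq_lift; rewrite -{}eq_j => eq_lift; congr (_, _); apply/permP => k.
by apply: (@lift_inj _ i); rewrite -!(lift_perm_lift j1) eq_lift.
Qed.

Lemma unbump_filter_word_lift_perm n (i j : 'I_n.+1) (t : 'S_n) :
  [seq unbump i a | a <- word (lift_perm j i t) & a != i :> nat] = word t.
Proof.
rewrite word_lift_perm filter_ins ?notin_map_bump ?size_bump_word_ge //.
by rewrite -map_comp (eq_map (@bumpK i)) map_id.
Qed.

Lemma index_word_lift_perm n (i j : 'I_n.+1) (t : 'S_n) :
  index (i : nat) (word (lift_perm j i t)) = j.
Proof. by rewrite word_lift_perm index_ins ?notin_map_bump ?size_bump_word_ge. Qed.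

Lemma bd_lift_perm n (i : 'I_n.+1) (x : 'S_n.+1 -> algC) (t : 'S_n) :
  bd i x t = \sum_(j < n.+1) (-1) ^+ j * x (lift_perm j i t).
Proof.
rewrite /bd (reindex _ (onW_bij _ (bij_lift_perm i))) /=.
rewrite (eq_bigl (fun p => p.2 == t)) => [|[j t']]; last first.
  by rewrite /= unbump_filter_word_lift_perm (inj_eq (@word_inj _)).
pose F j t' := (-1) ^+ index (i : nat) (word (lift_perm j i t')) * x (lift_perm j i t').
rewrite -(pair_big xpredT (pred1 t) F) /=; apply: eq_bigr => j _.
by rewrite big_pred1_eq /F index_word_lift_perm.
Qed.

Lemma sgnp_lift_perm n (i j : 'I_n.+1) (t : 'S_n) :
  (-1) ^+ j * sgnp (lift_perm j i t) = (-1) ^+ i * sgnp t.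
Proof. by rewrite /sgnp odd_lift_perm !signr_addb !signr_odd -!mulrA signrMK. Qed.

Definition lam_coef (r k d : nat) : nat :=
  if (d < k)%N then 'C(r + (k.-1 - d), r) else 0.

Lemma lamE r k (s : 'S_r) :
  lam r k s = (-1) ^+ k.-1 * sgnp s * (lam_coef r k (ndes (word s)))%:R.
Proof.
rewrite /lam /lE /lam_coef; move: (ndes (word s)) => d.
have lE_test (t : 'I_k) : ((1 <= k - t) && (d == (k - t).-1))%N = (d.+1 == k - t)%N.
  by case: (k - t)%N.
under eq_bigr do rewrite lE_test.
case: (ltnP d k) => dk; last first.
  rewrite mulr0 big1 // => t _; rewrite ifN ?mulr0 //.
  by apply/eqP; have := ltn_ord t; lia.
have t0_lt : (k.-1 - d < k)%N by lia.
rewrite (bigD1 (Ordinal t0_lt)) //= big1 ?addr0 => [|t t_neq]; last first.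
  rewrite ifN ?mulr0 //; apply: contra t_neq => /eqP eq_t.
  by apply/eqP/val_inj => /=; have := ltn_ord t; lia.
rewrite ifT; last by apply/eqP; lia.
rewrite (_ : (k - (k.-1 - d)).-1 = d)%N; last by lia.
have sign_k : (-1) ^+ k.-1 = (-1) ^+ (k.-1 - d) * (-1) ^+ d :> algC.
  by rewrite -exprD; congr (_ ^+ _); lia.
by rewrite -bin_sub ?leq_addl // addnK sign_k; ring.
Qed.

Lemma lam_coef_rec n k d : (d <= n)%N ->
  (d.+1 * lam_coef n.+1 k d + (n - d) * lam_coef n.+1 k d.+1 = k * lam_coef n k d)%N.
Proof.
rewrite /lam_coef => dn; case: (ltnP d k) => dk; last first.
  by rewrite ifN ?muln0 // -leqNgt leqW.
case: (ltnP d.+1 k) => [dk1 | kd].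
  have [m ->] : exists m, k = (d + m.+2)%N by exists (k - d.+2)%N; lia.
  rewrite (_ : (d + m.+2).-1 - d = m.+1)%N; last by lia.
  rewrite (_ : (d + m.+2).-1 - d.+1 = m)%N; last by lia.
  have := mul_bin_left (n + m.+1) n.
  rewrite (_ : n + m.+1 - n = m.+1)%N; last by lia.
  rewrite (_ : n.+1 + m.+1 = (n + m.+1).+1)%N; last by lia.
  rewrite (_ : n.+1 + m = n + m.+1)%N ?binS; last by lia.
  by move: (binomial _ n.+1) (binomial _ n) => A B; nia.
have -> : k = d.+1 by lia.
by rewrite subnn !addn0 !binn muln0 addn0 muln1.
Qed.

Lemma bd_lam n (i : 'I_n.+1) k (t : 'S_n) :
  bd i (lam n.+1 k) t = (-1) ^+ i * k%:R * lam n k t.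
Proof.
set u := map (bump i) (word t).
have lam_lift (j : 'I_n.+1) : (-1) ^+ j * lam n.+1 k (lift_perm j i t) =
    (-1) ^+ k.-1 * ((-1) ^+ i * sgnp t) * (lam_coef n.+1 k (ndes (ins j (i : nat) u)))%:R.
  by rewrite lamE word_lift_perm -(sgnp_lift_perm i j); ring.
rewrite bd_lift_perm (eq_bigr _ (fun j _ => lam_lift j)) -big_distrr /=.
rewrite (sum_ins_ndes (fun d => (lam_coef n.+1 k d)%:R)) ?notin_map_bump //; last first.
  by rewrite size_map size_word.
rewrite /u ndes_map_bump -!mulrnA -natrD mulnC [(_ * (n - _))%N]mulnC lam_coef_rec.
  by rewrite lamE natrM; ring.
exact: leq_trans (ndes_word_le t) (leq_pred n).
Qed.

Lemma poly_eq_at_nats (R : numDomainType) r (p q : {poly R}) :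
  (size p <= r.+1)%N -> (size q <= r.+1)%N ->
  (forall m, (m <= r)%N -> p.[m%:R] = q.[m%:R]) -> p = q.
Proof.
move=> sp sq pq; apply/eqP; rewrite -subr_eq0; apply/eqP.
apply: (@roots_geq_poly_eq0 _ _ [seq m%:R | m <- iota 0 r.+1]).
- apply/allP => y /mapP[m]; rewrite mem_iota => /andP[_ mr] ->.
  by rewrite /root hornerD hornerN pq // subrr.
- by rewrite map_inj_uniq ?iota_uniq // => m1 m2 /eqP; rewrite eqr_nat => /eqP.
by rewrite size_map size_iota (leq_trans (size_polyD _ _)) // size_polyN geq_max sp sq.
Qed.

Lemma prod_rising x r : (\prod_(m < r) (x.+1 + m) = r`! * 'C(r + x, r))%N.
Proof.
rewrite mulnC bin_ffact ffact_prod (reindex_inj rev_ord_inj) /=.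
by apply: eq_bigr => m _; have := ltn_ord m; lia.
Qed.

Lemma prod_lam_coef (R : comPzRingType) r k d : (d < r)%N ->
  \prod_(m < r) (k%:R - (d%:R - m%:R)) = (r`! * lam_coef r k d)%:R :> R.
Proof.
rewrite /lam_coef => dr; case: (ltnP d k) => dk.
  rewrite -prod_rising natr_prod; apply: eq_bigr => m _.
  rewrite natrD -[(k.-1 - d).+1]subSn ?prednK ?natrB; [ring | lia ..].
have m0 : (d - k < r)%N by lia.
rewrite muln0 (bigD1 (Ordinal m0)) //= natrB //.
by rewrite (_ : k%:R - _ = 0) ?mul0r //; ring.
Qed.

Lemma vdm_unit r : vdm r \in unitmx.
Proof.
have -> : vdm r = diag_mx (\row_(a < r) (a.+1)%:R) *m
                  (Vandermonde r (\row_(j < r) ((j.+1)%:R : algC)))^T.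
  by apply/matrixP => a b; rewrite mul_diag_mx !mxE exprS.
rewrite unitmxE unitfE det_mulmx det_tr det_Vandermonde det_diag mulf_neq0 //.
  by apply/prodf_neq0 => a _; rewrite mxE pnatr_eq0.
apply/prodf_neq0 => a _; apply/prodf_neq0 => b ab; rewrite !mxE subr_eq0 eqr_nat.
by rewrite eqSS gtn_eqF.
Qed.

Lemma eul0 r (s : 'S_r) : eul r 0 s = 0.
Proof. by rewrite /eul big_pred0. Qed.

Lemma eulE r (b : 'I_r) (s : 'S_r) :
  eul r b.+1 s = \sum_(a < r) invmx (vdm r) b a * ((-1) ^+ a * lam r a.+1 s).
Proof. by rewrite /eul (big_pred1 b) // => b'; rewrite /= eqSS. Qed.

Lemma vdm_eul r (a : 'I_r) (s : 'S_r) :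
  \sum_(b < r) (a.+1)%:R ^+ b.+1 * eul r b.+1 s = (-1) ^+ a * lam r a.+1 s.
Proof.
pose lam_col := \col_(a < r) ((-1) ^+ a * lam r a.+1 s).
have -> : (-1) ^+ a * lam r a.+1 s = (vdm r *m (invmx (vdm r) *m lam_col)) a 0.
  by rewrite mulmxA mulmxV ?vdm_unit // mul1mx mxE.
rewrite mxE; apply: eq_bigr => b _; rewrite eulE !mxE.
by congr (_ * _); apply: eq_bigr => c _; rewrite mxE.
Qed.

Lemma lam_eul r k (s : 'S_r) : (0 < r)%N ->
  (-1) ^+ k.-1 * lam r k s = \sum_(b < r) k%:R ^+ b.+1 * eul r b.+1 s.
Proof.
move=> r_gt0; have d_lt : (ndes (word s) < r)%N by have := ndes_word_le s; lia.
pose p : {poly algC} := (sgnp s / (r`!)%:R) *: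
  \prod_(m < r) ('X - ((ndes (word s))%:R - m%:R)%:P).
pose q : {poly algC} := \sum_(b < r) eul r b.+1 s *: 'X^(b.+1).
have p_lam m : p.[m%:R] = (-1) ^+ m.-1 * lam r m s.
  rewrite hornerZ horner_prod (eq_bigr _ (fun m _ => hornerXsubC _ _)) prod_lam_coef //.
  rewrite lamE -[in RHS]mulrA signrMK natrM mulrA divfK //.
  by rewrite pnatr_eq0 -lt0n fact_gt0.
have q_eval x : q.[x] = \sum_(b < r) x ^+ b.+1 * eul r b.+1 s.
  by rewrite horner_sum; apply: eq_bigr => b _; rewrite hornerZ hornerXn mulrC.
suff pq : p = q by rewrite -q_eval -pq p_lam.
apply: (@poly_eq_at_nats _ r) => [||[_|m m_lt]].
- rewrite (leq_trans (size_scale_leq _ _)) //.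
  by rewrite size_prod_XsubC /index_enum -enumT size_enum_ord.
- rewrite (leq_trans (size_sum _ _ _)) //; apply/bigmax_leqP => b _.
  by rewrite (leq_trans (size_scale_leq _ _)) // size_polyXn ltnS ltn_ord.
- rewrite p_lam q_eval /lam big_ord0 mulr0 big1 // => b _.
  by rewrite expr0n mul0r.
by rewrite p_lam q_eval (vdm_eul (Ordinal m_lt)).
Qed.

Lemma bd_lincomb (I : finType) (c : I -> algC) n (x : I -> 'S_n -> algC)
    (y : 'S_n -> algC) i t :
  (forall s, y s = \sum_a c a * x a s) -> bd i y t = \sum_a c a * bd i (x a) t.
Proof.
move=> yE; rewrite /bd; under eq_bigr do rewrite yE mulr_sumr.
rewrite exchange_big; apply: eq_bigr => a _; rewrite mulr_sumr.
by apply: eq_bigr => s _; rewrite mulrCA.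
Qed.

Lemma vdm_mul_eul n (a : 'I_n.+1) (t : 'S_n) : (0 < n)%N ->
  (vdm n.+1 *m \col_(c < n.+1) eul n c t) a 0 = (a.+1)%:R * ((-1) ^+ a * lam n a.+1 t).
Proof.
move=> n_gt0; rewrite (lam_eul a.+1 t n_gt0) mulr_sumr mxE big_ord_recl !mxE eul0 mulr0 add0r.
by apply: eq_bigr => b _; rewrite !mxE exprS mulrA.
Qed.

Lemma bd_eul n (i : 'I_n.+1) k (t : 'S_n) : (0 < n)%N -> (1 <= k <= n.+1)%N ->
  bd i (eul n.+1 k) t = (-1) ^+ i * eul n k.-1 t.
Proof.
case: k => // k n_gt0 k_lt; set K := Ordinal k_lt; set V := invmx (vdm n.+1).
rewrite (bd_lincomb (c := fun a => V K a * (-1) ^+ a) (x := fun a => lam n.+1 a.+1)).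
  have -> : eul n k t = (V *m (vdm n.+1 *m \col_(c < n.+1) eul n c t)) K 0.
    by rewrite mulmxA mulVmx ?vdm_unit // mul1mx mxE.
  rewrite mxE mulr_sumr; apply: eq_bigr => a _.
  by rewrite bd_lam vdm_mul_eul //; ring.
by move=> s; rewrite (eulE K); apply: eq_bigr => a _; rewrite mulrA.
Qed.

Unset Implicit Arguments.

Theorem theorem2p1 (n : nat) (i : 'I_n) : (2 <= n)%N ->
  (forall k : nat, (1 <= k)%N -> forall t : 'S_n.-1,
     bd i (lam n k) t = (-1) ^+ i * k%:R * lam n.-1 k t) /\
  (forall k : nat, (1 <= k <= n)%N -> forall t : 'S_n.-1,
     bd i (eul n k) t = (-1) ^+ i * eul n.-1 k.-1 t).
Proof.
case: n i => [|n] i // n_gt0.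
by split=> k k_range t; [exact: bd_lam | exact: bd_eul].
Qed.
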